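(* Let $\Gamma$ be a congruence subgroup of $\mathrm{SL}_2(\mathbb{Z})$ containing $-I$, of level $N_0$, and let $N=N_0$, $4N_0$ or $2N_0$ according as $v_2(N_0)$ is $0$, $1$ or $\ge2$; assume $N>1$. Let $H$ be the image of $\Gamma$ in $\mathrm{SL}_2(\mathbb{Z}/N\mathbb{Z})$, let $\widetilde H=(\mathbb{Z}/N\mathbb{Z})^\times\cdot H\subseteq\mathrm{GL}_2(\mathbb{Z}/N\mathbb{Z})$, and assume $H=\widetilde H\cap\mathrm{SL}_2(\mathbb{Z}/N\mathbb{Z})$. Let $\mathcal{N}$ be the normalizer of $\widetilde H$ in $\mathrm{GL}_2(\mathbb{Z}/N\mathbb{Z})$, $\mathcal{C}=\mathcal{N}/\widetilde H$, and $Q_N=(\mathbb{Z}/N\mathbb{Z})^\times/((\mathbb{Z}/N\mathbb{Z})^\times)^2$, with $\det\colon\mathcal{C}\to Q_N$ the homomorphism induced by the determinant. Then the subgroups $G(N)\subseteq\mathrm{GL}_2(\mathbb{Z}/N\mathbb{Z})$ satisfying (a) $G(N)\cap\mathrm{SL}_2(\mathbb{Z}/N\mathbb{Z})=H$, (b) $G(N)\supseteq(\mathbb{Z}/N\mathbb{Z})^\times\cdot I$, and (c) $\det(G(N))=(\mathbb{Z}/N\mathbb{Z})^\times$ are precisely the inverse images under $\mathcal{N}\to\mathcal{C}$ of the subgroups $W\subseteq\mathcal{C}$ for which the determinant induces an isomorphism $W\xrightarrow{\sim}Q_N$.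
   Context: $v_2$ is the $2$-adic valuation. The determinant induces a map on $\mathcal{C}$ to $Q_N$ because $\det(\widetilde H)=((\mathbb{Z}/N\mathbb{Z})^\times)^2$. *)

From HB Require Import structures.
From mathcomp Require Import all_boot all_order all_algebra all_fingroup.
From mathcomp Require Import boolp.
Set Implicit Arguments. Unset Strict Implicit. Unset Printing Implicit Defensive.
Import GRing.Theory.
Local Open Scope ring_scope.

Definition Gamma_princ (M : nat) (A : 'M[int]_2) : Prop :=
  \det A = 1 /\ forall i j : 'I_2, (M%:Z %| A i j - (i == j)%:Z)%Z.

Definition congruence_subgroup (Gam : 'M[int]_2 -> Prop) : Prop :=
  [/\ forall A, Gam A -> \det A = 1,
      Gam 1%:M,
      forall A B, Gam A -> Gam B -> Gam (A *m B),
      forall A, Gam A -> Gam (invmx A)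
    & exists2 M, (0 < M)%N & forall A, Gamma_princ M A -> Gam A].

Definition level (Gam : 'M[int]_2 -> Prop) (N0 : nat) : Prop :=
  [/\ (0 < N0)%N, (forall A, Gamma_princ N0 A -> Gam A)
    & forall M, (0 < M)%N -> (forall A, Gamma_princ M A -> Gam A) -> (N0 <= M)%N].

Definition N_of_level (N0 : nat) : nat :=
  match logn 2 N0 with 0 => N0 | 1 => 4 * N0 | _ => 2 * N0 end.

Section GLN.
Variable N : nat.
Local Notation gT := {'GL_2['Z_N]}.

Definition redmx (A : 'M[int]_2) : 'M['Z_N]_2 := map_mx (fun z : int => z%:~R) A.

Definition SLN : {set gT} := [set g : gT | \det (GLval g) == 1].

Definition scalarsN : {set gT} := [set g : gT | is_scalar_mx (GLval g)].

Definition imageN (Gam : 'M[int]_2 -> Prop) : {set gT} :=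
  [set g : gT | `[< exists2 A, Gam A & redmx A = GLval g >]].

Definition Htilde (Gam : 'M[int]_2 -> Prop) : {set gT} :=
  (scalarsN * imageN Gam)%g.

Lemma det_GL_unit (g : gT) : \det (GLval g) \is a GRing.unit.
Proof. by rewrite -unitmxE; exact: GL_unit. Qed.

Definition detU (g : gT) : {unit 'Z_N} := FinRing.Unit (det_GL_unit g).

Definition squaresN : {set {unit 'Z_N}} := [set (u ^+ 2)%g | u : {unit 'Z_N}].
Definition QN : {set coset_of squaresN} := ([set: {unit 'Z_N}] / squaresN)%g.

Definition detQ (g : gT) : coset_of squaresN := coset squaresN (detU g).

Definition detC (Gam : 'M[int]_2 -> Prop) (w : coset_of (Htilde Gam)) :
  coset_of squaresN := detQ (repr w).

End GLN.

From HB Require Import structures.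
From mathcomp Require Import all_boot all_order all_algebra all_fingroup.
From mathcomp Require Import boolp.

(* The determinant modulo squares is a homomorphism GL_2(Z/N) -> Q_N whose kernel
   is (Z/N)^x . SL_2(Z/N) and contains Htilde, and detC is the map it induces on
   cosets of Htilde.  For a subgroup G normalising Htilde, the kernel of detC on
   G/Htilde is therefore ((Z/N)^x . (G ∩ SL_2)) / Htilde, which is trivial exactly
   when G ∩ SL_2 = H; and since the scalars have square determinants, detC maps
   G/Htilde onto Q_N exactly when det G is all of (Z/N)^x.  Subgroups containing
   Htilde as a normal subgroup correspond to subgroups W of C via G = preimage W. *)

Set Implicit Arguments.
Unset Strict Implicit.
Unset Printing Implicit Defensive.
Import GRing.Theory.
Local Open Scope group_scope.

Section InducedMap.
Variables (gT rT : finGroupType) (f : {morphism [set: gT] >-> rT}).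
Variables (K : {group gT}) (fbar : coset_of K -> rT).
Hypothesis sKker : K \subset 'ker f.
Hypothesis fbarE : forall w, fbar w = f (repr w).

Lemma induced_coset x : x \in 'N(K) -> fbar (coset K x) = f x.
Proof.
move=> nKx; rewrite fbarE.
have /rcosetP[k Kk ->] : repr (coset K x) \in K :* x.
  by rewrite -val_coset // mem_repr_coset.
by rewrite morphM ?inE // (mker (subsetP sKker k Kk)) mul1g.
Qed.

Lemma induced_morphM : {morph fbar : u v / u * v}.
Proof.
move=> u v; rewrite -{1}(coset_reprK u) -{1}(coset_reprK v) -morphM;
  try exact: repr_coset_norm.
by rewrite induced_coset ?groupM ?repr_coset_norm // morphM ?inE // -!fbarE.
Qed.

Lemma induced_image (G : {group gT}) :
  G \subset 'N(K) -> fbar @: (G / K) = f @* G.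
Proof.
move=> nKG; apply/setP => y.
apply/imsetP/morphimP => [[_ /morphimP[x nKx Gx ->] ->] |].
  by exists x; rewrite ?inE // induced_coset.
case=> x _ Gx ->; exists (coset K x); first exact: mem_quotient.
by rewrite induced_coset // (subsetP nKG).
Qed.

Lemma induced_injectiveP (G : {group gT}) :
  K <| G -> {in G / K &, injective fbar} <-> 'ker_G f \subset K.
Proof.
case/andP=> sKG nKG; split=> [inj | sker].
  apply/subsetP => x /setIP[Gx kx]; have nKx := subsetP nKG x Gx.
  apply: coset_idr => //; apply: inj; rewrite ?mem_quotient ?group1 //.
  by rewrite induced_coset // (mker kx) fbarE repr_coset1 morph1.
move=> _ _ /morphimP[x nKx Gx ->] /morphimP[y nKy Gy ->].
rewrite !induced_coset // => efxy.
have kxy : x * y^-1 \in 'ker_G f.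
  by rewrite !inE groupM ?groupV //= morphM ?morphV ?inE // efxy mulgV.
by rewrite /= -(mulgKV y x) coset_kerl ?(subsetP sker).
Qed.

End InducedMap.

Lemma squares_group_set {aT : finGroupType} :
  abelian [set: aT] -> group_set [set u ^+ 2 | u : aT].
Proof.
move=> cTT; apply/group_setP; split.
  by apply/imsetP; exists 1; rewrite ?expg1n.
move=> _ _ /imsetP[u _ ->] /imsetP[v _ ->]; apply/imsetP; exists (u * v) => //.
by rewrite expgMn //; apply: (centsP cTT); rewrite inE.
Qed.

Section GL2.
Variable N : nat.
Local Notation gT := {'GL_2['Z_N]}.
Local Notation uT := {unit 'Z_N}.

Lemma units_abelian : abelian [set: uT].
Proof. by apply/centsP => u _ v _; apply: val_inj; apply: mulrC. Qed.

Lemma squaresN_group_set : group_set (squaresN N).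
Proof. exact: squares_group_set units_abelian. Qed.

Canonical squaresN_group := Group squaresN_group_set.

Lemma mem_squaresN u : u ^+ 2 \in squaresN N.
Proof. by apply/imsetP; exists u. Qed.

Lemma squaresN_norm : [set: uT] \subset 'N(squaresN N).
Proof. exact: sub_abelian_norm units_abelian (subsetT _). Qed.

Lemma detUM : {in [set: gT] &, {morph @detU N : x y / x * y}}.
Proof. by move=> x y _ _; apply: val_inj => /=; rewrite -mulmxE det_mulmx. Qed.

Canonical detU_morphism := Morphism detUM.

Lemma detQM : {in [set: gT] &, {morph @detQ N : x y / x * y}}.
Proof.
move=> x y _ _.
by rewrite /detQ detUM ?inE // morphM ?(subsetP squaresN_norm) ?inE.
Qed.

Canonical detQ_morphism := Morphism detQM.

Lemma SLN_ker : SLN N = 'ker (@detU N).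
Proof. by apply/setP => x; rewrite !inE -val_eqE. Qed.

Lemma scalar_mx_unit (a : uT) : ((val a)%:M : 'M['Z_N]_2)%R \is a GRing.unit.
Proof. by rewrite unitmxE det_scalar unitrX // (valP a). Qed.

Definition scalGL (a : uT) : gT := FinRing.Unit (scalar_mx_unit a).

Lemma detU_scalGL a : detU (scalGL a) = a ^+ 2.
Proof. by apply: val_inj; rewrite /= det_scalar expg1 expr2. Qed.

Lemma scalarsNP g : reflect (exists a, g = scalGL a) (g \in scalarsN N).
Proof.
rewrite inE; apply: (iffP idP) => [/is_scalar_mxP[a ea] | [a ->]].
  have ua : a \is a GRing.unit.
    by rewrite -(unitrX_pos a (n:=2)) // -det_scalar -ea det_GL_unit.
  by exists (FinRing.Unit ua); apply: val_inj.
exact: scalar_mx_is_scalar.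
Qed.

Lemma scalarsN_cent (A : {set gT}) : A \subset 'C(scalarsN N).
Proof.
apply/centsP => g _ _ /scalarsNP[a ->].
by apply: val_inj => /=; rewrite -!mulmxE scalar_mxC.
Qed.

Lemma scalarsN_group_set : group_set (scalarsN N).
Proof.
apply/group_setP; split; first by apply/scalarsNP; exists 1; apply: val_inj.
move=> _ _ /scalarsNP[a ->] /scalarsNP[b ->]; apply/scalarsNP; exists (a * b).
by apply: val_inj => /=; rewrite -mulmxE -scalar_mxM.
Qed.

Canonical scalarsN_group := Group scalarsN_group_set.

Lemma ker_detQ : 'ker (@detQ N) = scalarsN N * SLN N.
Proof.
apply/eqP; rewrite eqEsubset; apply/andP; split; apply/subsetP => x.
  move/mker=> dx; have /imsetP[b _ eb] : detU x \in squaresN N.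
    by apply: coset_idr; rewrite ?(subsetP squaresN_norm) ?inE.
  apply/mulsgP; exists (scalGL b) ((scalGL b)^-1 * x); rewrite ?mulKVg //.
    by apply/scalarsNP; exists b.
  by rewrite SLN_ker !inE morphM ?morphV ?inE //= detU_scalGL eb mulVg.
case/mulsgP=> _ s /scalarsNP[a ->]; rewrite SLN_ker => ks ->.
have ds : detU s = 1 := mker ks.
rewrite !inE /= morphM ?inE //= /detQ detU_scalGL ds morph1 mulg1.
by rewrite coset_id ?mem_squaresN.
Qed.

Lemma redmxM A B : redmx N (A *m B)%R = (redmx N A *m redmx N B)%R.
Proof. exact: map_mxM. Qed.

Lemma redmx1 : redmx N 1%:M%R = 1%:M%R.
Proof. exact: map_mx1. Qed.

End GL2.

Section Htilde.
Variables (N : nat) (Gam : 'M[int]_2 -> Prop).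
Hypothesis hGam : congruence_subgroup Gam.
Hypothesis hH : imageN N Gam = Htilde N Gam :&: SLN N.
Local Notation gT := {'GL_2['Z_N]}.
Local Notation Ht := (Htilde N Gam).

Lemma imageN_group_set : group_set (imageN N Gam).
Proof.
case: hGam => _ Gam1 GamM _ _; apply/group_setP; split.
  by rewrite inE; apply/asboolP; exists 1%:M%R; rewrite ?redmx1.
move=> x y; rewrite !inE => /asboolP[A GA eA] /asboolP[B GB eB].
apply/asboolP; exists (A *m B)%R; first exact: GamM.
by rewrite redmxM eA eB.
Qed.

Canonical imageN_group := Group imageN_group_set.

Lemma Htilde_group_set : group_set Ht.
Proof. by apply/comm_group_setP; apply: centC; rewrite centsC scalarsN_cent. Qed.

Canonical Htilde_group := Group Htilde_group_set.

Lemma scalarsN_sub_Htilde : scalarsN N \subset Ht.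
Proof. exact: mulG_subl. Qed.

Lemma Htilde_sub_ker_detQ : Ht \subset 'ker (@detQ N).
Proof. by rewrite ker_detQ mulgS // hH subsetIr. Qed.

Lemma ker_detQ_sub (G : {group gT}) :
  scalarsN N \subset G -> 'ker_G (@detQ N) = scalarsN N * (G :&: SLN N).
Proof. by move=> sSG; rewrite ker_detQ setIC -group_modl // setIC. Qed.

Lemma Htilde_normal (G : {group gT}) :
  G :&: SLN N = imageN N Gam -> scalarsN N \subset G -> Ht <| G.
Proof.
move=> eGH sSG; rewrite /normal mul_subG -?eGH ?subsetIl //=.
apply: normsM; first exact/cents_norm/scalarsN_cent.
by rewrite -eGH SLN_ker normsI ?normG // (subset_trans (subsetT G)) ?ker_norm.
Qed.

Lemma detC_morphM : {morph @detC N Gam : u v / u * v}.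
Proof. exact: induced_morphM Htilde_sub_ker_detQ (fun w => erefl). Qed.

Lemma detC_injectiveP (G : {group gT}) : Ht <| G ->
  {in G / Ht &, injective (@detC N Gam)} <-> G :&: SLN N = imageN N Gam.
Proof.
move=> nsHtG; have sSG := subset_trans scalarsN_sub_Htilde (normal_sub nsHtG).
rewrite (induced_injectiveP Htilde_sub_ker_detQ (fun w => erefl) nsHtG).
rewrite ker_detQ_sub //; split=> [sSGH | ->]; last exact: subxx.
have sGH : G :&: SLN N \subset Ht := subset_trans (mulg_subr _ (group1 _)) sSGH.
apply/eqP; rewrite eqEsubset hH !subsetI sGH !subsetIr andbT /=.
by rewrite subIset ?(normal_sub nsHtG).
Qed.

Lemma detC_imageP (G : {group gT}) : Ht <| G ->
  @detC N Gam @: (G / Ht) = QN N <-> [set detU g | g in G] = [set: {unit 'Z_N}].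
Proof.
move=> nsHtG; have sSG := subset_trans scalarsN_sub_Htilde (normal_sub nsHtG).
rewrite (induced_image Htilde_sub_ker_detQ (fun w => erefl)) ?normal_norm //.
have -> : detQ_morphism N @* G = (detU_morphism N @* G) / squaresN N.
  rewrite /quotient !morphimEsub ?subsetT // -?imset_comp //.
  exact: subset_trans (subsetT _) (squaresN_norm N).
rewrite -(morphimEsub _ (subsetT G)) /QN; split=> [eQ | ->] //.
have sqU : squaresN N \subset detU_morphism N @* G.
  apply/subsetP => _ /imsetP[u _ ->]; rewrite -detU_scalGL.
  by rewrite mem_morphim ?inE ?(subsetP sSG) //; apply/scalarsNP; exists u.
have nsqU : squaresN N <| detU_morphism N @* G.
  by rewrite -sub_abelian_normal // (abelianS (subsetT _) (units_abelian N)).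
have nsqT : squaresN N <| [set: {unit 'Z_N}].
  by rewrite -sub_abelian_normal ?subsetT ?units_abelian.
by rewrite -[LHS]/(gval (detU_morphism N @* G)%G) (quotient_inj nsqU nsqT eQ).
Qed.

End Htilde.

Theorem lemma5p2 (Gam : 'M[int]_2 -> Prop) (N0 N : nat)
  (hGam : congruence_subgroup Gam)
  (hneg : Gam (- 1%:M)%R)
  (hlev : level Gam N0)
  (hN : N = N_of_level N0)
  (hN1 : (1 < N)%N)
  (hH : imageN N Gam = Htilde N Gam :&: SLN N) :
  forall G : {group {'GL_2['Z_N]}},
    [/\ G :&: SLN N = imageN N Gam,
        scalarsN N \subset G
      & [set detU g | g in G] = [set: {unit 'Z_N}]]
    <->
    exists W : {group coset_of (Htilde N Gam)},
      [/\ W \subset 'N(Htilde N Gam) / Htilde N Gam,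
          {in W &, {morph @detC N Gam : x y / x * y}},
          {in W &, injective (@detC N Gam)},
          @detC N Gam @: W = QN N
        & G :=: coset (Htilde N Gam) @*^-1 W].
Proof.
move=> G; split=> [[eGH sSG detG] | [W [_ _ injW imW ->]]].
  have nsHtG := Htilde_normal eGH sSG.
  exists (G / Htilde N Gam)%G; split.
  - exact/quotientS/normal_norm.
  - by move=> u v _ _; apply: detC_morphM.
  - exact/(detC_injectiveP hGam hH nsHtG).
  - exact/(detC_imageP hGam hH nsHtG).
  - by rewrite quotientGK.
have nsHtG := @normal_cosetpre _ (Htilde_group N hGam) W.
rewrite -(cosetpreK W) in injW imW; split.
- exact: (detC_injectiveP hGam hH nsHtG).1 injW.
- exact: subset_trans (scalarsN_sub_Htilde N hGam) (normal_sub nsHtG).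
- exact: (detC_imageP hGam hH nsHtG).1 imW.
Qed.
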